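(* Let $\hat\rho$ be a density operator on $L^2(\mathbb R)$ with bounded Fock support. The following are equivalent: (i) $\hat\rho$ is an eigenvector of $\mathcal V_t$ for some $t>1$; (ii) $\hat\rho$ is an eigenvector of $\mathcal V_t$ for all $t\ge1$; (iii) there exists $m\in\mathbb N$ such that $W_{\hat\rho}(\alpha)\propto|\alpha|^{2m}e^{-2|\alpha|^2}$, and the corresponding eigenvalue is $t^m$; (iv) there exists $m\in\mathbb N$ such that $\hat\rho=\frac1{2^m}\sum_{k=0}^m\binom mk|k\rangle\langle k|$.
   Context: Let $\hat a$ be the annihilation operator on $L^2(\mathbb R)$, $\hat n=\hat a^\dagger\hat a$, $\{|k\rangle\}$ the Fock basis, $\hat D(\alpha)=\exp(\alpha\hat a^\dagger-\alpha^*\hat a)$, and $W_{\hat A}(\alpha)=\frac2\pi\mathrm{Tr}[\hat A\hat D(\alpha)(-1)^{\hat n}\hat D(\alpha)^\dagger]$ the Wigner function. An operator $\hat A$ has bounded Fock support if $\hat P_N\hat A\hat P_N=\hat A$ for some $N$, where $\hat P_N=\sum_{k=0}^N|k\rangle\langle k|$. For $t>0$, the Vertigo map on such operators is $\mathcal V_t[\hat A]=\sum_{k\ge0}\frac{(t-1)^k}{k!}t^{\hat n/2}\hat a^k\hat A\hat a^{\dagger k}t^{\hat n/2}$ (finite sum), equivalently $W_{\mathcal V_t[\hat A]}(\alpha)=W_{\hat A}(\sqrt t\alpha)e^{2(t-1)|\alpha|^2}$. ''Eigenvector of $\mathcal V_t$'' means $\mathcal V_t[\hat\rho]=\lambda\hat\rho$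 for some scalar $\lambda$. *)

From Stdlib Require Import Reals Factorial.
From Coquelicot Require Import Coquelicot.
Open Scope R_scope.

(** An operator with (possibly) bounded Fock support is represented by its
    Fock-basis matrix elements  A i j = <i|A|j>. *)
Definition Op := nat -> nat -> C.

Fixpoint csum (n : nat) (f : nat -> C) : C :=
  match n with O => RtoC 0 | S n' => Cplus (csum n' f) (f n') end.

Definition CSeries (a : nat -> C) : C :=
  (Series (fun n => Re (a n)), Series (fun n => Im (a n))).

Fixpoint Cpow (z : C) (n : nat) : C :=
  match n with O => RtoC 1 | S n' => Cmult z (Cpow z n') end.

(** bounded Fock support: P_N A P_N = A for some N *)
Definition fock_bounded (A : Op) : Prop :=
  exists N : nat, forall i j, (N < i)%nat \/ (N < j)%nat -> A i j = RtoC 0.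

Definition trace (A : Op) : C := CSeries (fun i => A i i).

Definition is_density (A : Op) : Prop :=
  (forall i j, A j i = Cconj (A i j)) /\
  (forall (M : nat) (v : nat -> C),
      0 <= Re (csum M (fun i => csum M (fun j =>
                 Cmult (Cmult (Cconj (v i)) (A i j)) (v j))))) /\
  trace A = RtoC 1.

(** Vertigo map: V_t[A] = sum_k (t-1)^k/k! t^{n/2} a^k A a^{dag k} t^{n/2}.
    <i| a^k = sqrt((i+k)!/i!) <i+k|,  a^{dag k}|j> = sqrt((j+k)!/j!) |j+k>. *)
Definition vertigo (t : R) (A : Op) : Op := fun i j =>
  CSeries (fun k =>
    Cmult (RtoC ((t - 1) ^ k / INR (Factorial.fact k) * sqrt t ^ i * sqrt t ^ j
                 * sqrt (INR (Factorial.fact (i + k)) / INR (Factorial.fact i))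
                 * sqrt (INR (Factorial.fact (j + k)) / INR (Factorial.fact j))))
          (A (i + k)%nat (j + k)%nat)).

Definition vertigo_eigen (t : R) (A : Op) : Prop :=
  exists lam : C, forall i j, vertigo t A i j = Cmult lam (A i j).

(** Fock matrix element <m|D(al)|n> of the displacement operator
    D(al) = e^{-|al|^2/2} e^{al a^dag} e^{-al^* a}. *)
Definition disp_elem (al : C) (m n : nat) : C :=
  Cmult (RtoC (exp (- (Cmod al) ^ 2 / 2)))
    (csum (S (Nat.min m n)) (fun k =>
       Cmult (RtoC (sqrt (INR (Factorial.fact m) * INR (Factorial.fact n))
                    / (INR (Factorial.fact k) * INR (Factorial.fact (m - k)) * INR (Factorial.fact (n - k)))))
             (Cmult (Cpow al (m - k)) (Cpow (Copp (Cconj al)) (n - k))))).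

(** <j| D(al) (-1)^n D(al)^dag |i> *)
Definition disp_parity_elem (al : C) (j i : nat) : C :=
  CSeries (fun l => Cmult (RtoC ((-1) ^ l))
                          (Cmult (disp_elem al j l) (Cconj (disp_elem al i l)))).

(** Wigner function W_A(al) = 2/pi Tr[A D(al) (-1)^n D(al)^dag] *)
Definition wigner (A : Op) (al : C) : C :=
  Cmult (RtoC (2 / PI))
    (CSeries (fun i => CSeries (fun j => Cmult (A i j) (disp_parity_elem al j i)))).

Definition wigner_prop (m : nat) (A : Op) : Prop :=
  exists c : C, forall al : C,
    wigner A al = Cmult c (RtoC (Cmod al ^ (2 * m) * exp (-2 * Cmod al ^ 2))).

Definition binom_state (m : nat) : Op := fun i j =>
  if Nat.eqb i j then
    (if Nat.leb i m then RtoC (Binomial.C m i / 2 ^ m) else RtoC 0)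
  else RtoC 0.

(* In the Fock basis both sides of the equivalence are governed by maps that are
   triangular along the diagonals.  (V_t A)_{ij} is t^{(i+j)/2} A_{ij} plus a combination
   of the A_{i+k,j+k}, k >= 1; and (pi/2) e^{2|al|^2} W_A(al) is a polynomial in al and
   conj al whose coefficient of al^p (conj al)^q is a nonzero multiple of A_{qp} plus a
   combination of the A_{q+r,p+r}, r >= 1.  So a finitely supported operator vanishes as
   soon as V_t - t^M annihilates it and its (M,M) entry is zero, or as soon as its Wigner
   polynomial is zero.

   The binomial state B_m is an eigenvector of every V_t, with eigenvalue t^m, and its
   Wigner function is proportional to |al|^{2m} e^{-2|al|^2}.  Conversely, if rho is an
   eigenvector of V_t (t > 1) and M is its last nonzero diagonal entry, positivity confines
   rho to [0,M]^2 and forces the eigenvalue t^M, so rho - c B_M vanishes for the c that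
   kills its (M,M) entry; if W_rho is proportional to |al|^{2m} e^{-2|al|^2}, then
   rho - c B_m has zero Wigner polynomial for a suitable c.  In both cases the trace gives
   c = 1. *)

From Pilot Require Import Defs.
From Stdlib Require Import Reals Factorial Lra Lia Psatz.
From Coquelicot Require Import Coquelicot.
From mathcomp Require ssreflect ssrbool ssrnat fintype bigop binomial.
Open Scope R_scope.

Set Bullet Behavior "Strict Subproofs".

(** * Finite sums and complex series *)

Lemma fact_pos n : 0 < INR (fact n).
Proof. apply lt_0_INR, lt_O_fact. Qed.

Lemma sqrt_pow_double t n : 0 <= t -> sqrt t ^ (n + n) = t ^ n.
Proof.
  intros Ht. replace (n + n)%nat with (2 * n)%nat by lia. rewrite pow_mult, pow2_sqrt; auto.
Qed.

Lemma sum_binomial x n : sum_f_R0 (fun k => Binomial.C n k * x ^ k) n = (x + 1) ^ n.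
Proof. rewrite binomial. apply sum_eq. intros k _. rewrite pow1. ring. Qed.

Lemma Cconj_RtoC r : Cconj (RtoC r) = RtoC r.
Proof. apply injective_projections; simpl; ring. Qed.

Lemma RtoC_neq0 x : x <> 0 -> RtoC x <> RtoC 0.
Proof. intros Hx E. apply Hx, RtoC_inj, E. Qed.

Lemma neg1_pow_sqr n : (-1) ^ n * (-1) ^ n = 1.
Proof. rewrite <- Rpow_mult_distr. replace (-1 * -1) with 1 by ring. apply pow1. Qed.

Lemma pow_inj_gt1 x n m : 1 < x -> x ^ n = x ^ m -> n = m.
Proof.
  intros Hx E. destruct (Nat.lt_trichotomy n m) as [H|[H|H]]; auto;
    apply (Rlt_pow x) in H; lra.
Qed.

Lemma csum_ext n f g : (forall i, (i < n)%nat -> f i = g i) -> csum n f = csum n g.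
Proof. induction n as [|n IH]; intros H; simpl; auto. rewrite IH, H; auto. Qed.

Lemma csum_eq0 n f : (forall i, (i < n)%nat -> f i = RtoC 0) -> csum n f = RtoC 0.
Proof. induction n as [|n IH]; intros H; simpl; auto. rewrite IH, H; auto. ring. Qed.

Lemma csum_plus n f g : csum n (fun i => f i + g i)%C = (csum n f + csum n g)%C.
Proof. induction n as [|n IH]; simpl. ring. rewrite IH; ring. Qed.

Lemma csum_opp n f : (- csum n f)%C = csum n (fun i => - f i)%C.
Proof. induction n as [|n IH]; simpl. ring. rewrite <- IH; ring. Qed.

Lemma csum_mult_l n c f : (c * csum n f)%C = csum n (fun i => c * f i)%C.
Proof. induction n as [|n IH]; simpl. ring. rewrite <- IH; ring. Qed.

Lemma csum_mult_r n c f : (csum n f * c)%C = csum n (fun i => f i * c)%C.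
Proof. induction n as [|n IH]; simpl. ring. rewrite <- IH; ring. Qed.

Lemma csum_conj n f : Cconj (csum n f) = csum n (fun i => Cconj (f i)).
Proof.
  induction n as [|n IH]; simpl.
  - apply injective_projections; simpl; ring.
  - rewrite Cplus_conj, IH; auto.
Qed.

Lemma csum_add n m f : csum (n + m) f = (csum n f + csum m (fun i => f (n + i)%nat))%C.
Proof.
  induction m as [|m IH]; simpl.
  - rewrite Nat.add_0_r. ring.
  - rewrite Nat.add_succ_r. simpl. rewrite IH. ring.
Qed.

Lemma csum_Sl n f : csum (S n) f = (f O + csum n (fun i => f (S i)))%C.
Proof. rewrite (csum_add 1 n). simpl. ring. Qed.

Lemma csum_S n f : csum (S n) f = (csum n f + f n)%C.
Proof. reflexivity. Qed.

Lemma csum_widen n m f : (n <= m)%nat ->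
  (forall i, (n <= i < m)%nat -> f i = RtoC 0) -> csum m f = csum n f.
Proof.
  intros Hnm H. replace m with (n + (m - n))%nat by lia.
  rewrite csum_add, (csum_eq0 (m - n)). ring. intros i Hi. apply H. lia.
Qed.

Lemma csum_only n p f : (p < n)%nat ->
  (forall i, (i < n)%nat -> i <> p -> f i = RtoC 0) -> csum n f = f p.
Proof.
  intros Hp H. rewrite (csum_widen (S p)) by (auto; intros; apply H; lia).
  simpl. rewrite csum_eq0. ring. intros; apply H; lia.
Qed.

Lemma csum_pair n p q f : p <> q -> (p < n)%nat -> (q < n)%nat ->
  (forall i, (i < n)%nat -> i <> p -> i <> q -> f i = RtoC 0) ->
  csum n f = (f p + f q)%C.
Proof.
  intros Hpq Hp Hq H.
  rewrite (csum_ext _ _ (fun i => (if (i =? p)%nat then f p else RtoC 0)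
                                 + (if (i =? q)%nat then f q else RtoC 0))%C).
  - rewrite csum_plus, (csum_only n p), (csum_only n q), !Nat.eqb_refl; auto;
      intros i _ Hi; apply Nat.eqb_neq in Hi; rewrite Hi; auto.
  - intros i Hi.
    destruct (Nat.eqb_spec i p), (Nat.eqb_spec i q); subst; try lia; try ring.
    rewrite H; auto. ring.
Qed.

Lemma csum_swap n m (f : nat -> nat -> C) :
  csum n (fun i => csum m (fun j => f i j)) = csum m (fun j => csum n (fun i => f i j)).
Proof.
  induction n as [|n IH]; simpl.
  - symmetry. apply csum_eq0. auto.
  - rewrite IH, <- csum_plus. auto.
Qed.

Lemma csum_prod n m f g :
  (csum n f * csum m g)%C = csum n (fun k => csum m (fun l => f k * g l))%C.
Proof. rewrite csum_mult_r. apply csum_ext. intros. apply csum_mult_l. Qed.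

Lemma csum_shift n s f : (forall i, (i < s)%nat -> f i = RtoC 0) ->
  (forall i, (n <= i)%nat -> f i = RtoC 0) ->
  csum n f = csum n (fun i => f (i + s)%nat).
Proof.
  intros Hlo Hhi. destruct (Nat.le_gt_cases n s).
  - rewrite !csum_eq0; auto; intros; [apply Hhi | apply Hlo]; lia.
  - replace n with (s + (n - s))%nat at 1 by lia.
    rewrite csum_add, (csum_eq0 s), Cplus_0_l by auto.
    rewrite (csum_widen (n - s) n (fun i => f (i + s)%nat)) by (lia || intros; apply Hhi; lia).
    apply csum_ext. intros. f_equal. lia.
Qed.

Lemma csum_RtoC n (f : nat -> R) :
  csum (S n) (fun i => RtoC (f i)) = RtoC (sum_f_R0 f n).
Proof.
  induction n as [|n IH]; simpl.
  - apply injective_projections; simpl; ring.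
  - simpl in IH. rewrite IH, RtoC_plus. auto.
Qed.

Lemma is_series_lin (u v : R) a b la lb : is_series a la -> is_series b lb ->
  is_series (fun n => u * a n + v * b n) (u * la + v * lb).
Proof.
  intros. apply (is_series_plus (fun n => u * a n) (fun n => v * b n)).
  - apply (is_series_scal_l u a la); auto.
  - apply (is_series_scal_l v b lb); auto.
Qed.

Lemma is_series_finite (a : nat -> R) N : (forall n, (N < n)%nat -> a n = 0) ->
  is_series a (sum_n a N).
Proof.
  intros Hz. apply (filterlim_ext_loc (fun _ => sum_n a N)); [|apply filterlim_const].
  exists N. intros n Hn. induction Hn as [|n Hn IH]; auto.
  rewrite sum_Sn, <- IH, Hz by lia. symmetry. apply Rplus_0_r.
Qed.

Lemma is_series_shift (a : nat -> R) l s : is_series a l ->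
  is_series (fun n => if (s <=? n)%nat then a (n - s)%nat else 0) l.
Proof.
  intros H. induction s as [|s IH].
  - eapply is_series_ext; [|exact H]. intros n. simpl. f_equal. lia.
  - apply is_series_decr_1. unfold plus, opp; simpl. rewrite Ropp_0, Rplus_0_r. exact IH.
Qed.

Definition Cis_series (a : nat -> C) (l : C) : Prop :=
  is_series (fun n => Re (a n)) (Re l) /\ is_series (fun n => Im (a n)) (Im l).

Lemma Cis_series_unique a l : Cis_series a l -> CSeries a = l.
Proof.
  intros [Hre Him]. unfold CSeries.
  rewrite (is_series_unique _ _ Hre), (is_series_unique _ _ Him).
  destruct l; reflexivity.
Qed.

Lemma Cis_series_ext a b l : (forall n, a n = b n) -> Cis_series a l -> Cis_series b l.
Proof.
  intros E [Hre Him]; split; eapply is_series_ext; eauto; intros; simpl; rewrite E; auto.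
Qed.

Lemma Cis_series_plus a b la lb : Cis_series a la -> Cis_series b lb ->
  Cis_series (fun n => a n + b n)%C (la + lb)%C.
Proof. intros [Ha1 Ha2] [Hb1 Hb2]; split; apply (is_series_plus (V := R_NormedModule)); auto. Qed.

Lemma Cis_series_scal c a l : Cis_series a l -> Cis_series (fun n => c * a n)%C (c * l)%C.
Proof.
  intros [Hre Him]. destruct c as [x y], l as [lr li]. split.
  - replace (Re ((x, y) * (lr, li))%C) with (x * lr + - y * li) by (simpl; ring).
    eapply is_series_ext; [|exact (is_series_lin x (- y) _ _ _ _ Hre Him)].
    intros n. simpl. destruct (a n). simpl. ring.
  - replace (Im ((x, y) * (lr, li))%C) with (x * li + y * lr) by (simpl; ring).
    eapply is_series_ext; [|exact (is_series_lin x y _ _ _ _ Him Hre)].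
    intros n. simpl. destruct (a n). simpl. ring.
Qed.

Lemma Cis_series_zero : Cis_series (fun _ => RtoC 0) (RtoC 0).
Proof.
  pose proof (is_series_finite (fun _ => 0) O (fun _ _ => eq_refl)) as H.
  rewrite sum_O in H. split; exact H.
Qed.

Lemma Cis_series_csum K (a : nat -> nat -> C) (l : nat -> C) :
  (forall r, (r < K)%nat -> Cis_series (a r) (l r)) ->
  Cis_series (fun n => csum K (fun r => a r n)) (csum K l).
Proof.
  induction K as [|K IH]; intros H; simpl.
  - apply Cis_series_zero.
  - apply Cis_series_plus; auto.
Qed.

Lemma csum_components N a :
  csum (S N) a = (sum_n (fun n => Re (a n)) N, sum_n (fun n => Im (a n)) N).
Proof.
  induction N as [|N IH].
  - rewrite !sum_O. simpl. destruct (a O). apply injective_projections; simpl; ring.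
  - change (csum (S (S N)) a) with (csum (S N) a + a (S N))%C.
    rewrite IH, !sum_Sn. reflexivity.
Qed.

Lemma Cis_series_finite a N : (forall n, (N <= n)%nat -> a n = RtoC 0) ->
  Cis_series a (csum N a).
Proof.
  intros Hz. destruct N as [|N].
  - eapply Cis_series_ext; [|apply Cis_series_zero]. intros n. rewrite Hz; auto. lia.
  - rewrite csum_components. split; apply is_series_finite; intros n Hn; rewrite Hz; auto.
Qed.

Lemma CSeries_finite a N : (forall n, (N <= n)%nat -> a n = RtoC 0) -> CSeries a = csum N a.
Proof. intros. apply Cis_series_unique, Cis_series_finite; auto. Qed.

Lemma Cis_series_shift a l s : Cis_series a l ->
  Cis_series (fun n => if (s <=? n)%nat then a (n - s)%nat else RtoC 0) l.
Proof.
  intros [Hre Him]. split.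
  - eapply is_series_ext; [|exact (is_series_shift _ _ s Hre)].
    intros n. simpl. destruct (s <=? n)%nat; auto.
  - eapply is_series_ext; [|exact (is_series_shift _ _ s Him)].
    intros n. simpl. destruct (s <=? n)%nat; auto.
Qed.

Lemma Cis_series_exp (w : R) : Cis_series (fun n => RtoC (w ^ n / INR (fact n))) (RtoC (exp w)).
Proof.
  split; simpl.
  - eapply is_series_ext; [|exact (is_exp_Reals w)]. intros n. simpl.
    unfold scal; simpl. unfold mult; simpl. rewrite pow_n_pow. unfold Rdiv. ring.
  - exact (proj2 Cis_series_zero).
Qed.

(** * Operators with bounded Fock support *)

Definition supported (K : nat) (A : Op) : Prop :=
  forall i j, (K <= i)%nat \/ (K <= j)%nat -> A i j = RtoC 0.

Lemma fock_bounded_supported A : fock_bounded A -> exists K, supported K A.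
Proof. intros [N HN]. exists (S N). intros i j H. apply HN. lia. Qed.

Lemma supported_le K K' A : (K <= K')%nat -> supported K A -> supported K' A.
Proof. intros HK H i j Hij. apply H. lia. Qed.

Lemma supported_csum K A (f : nat -> nat -> C) : supported K A ->
  CSeries (fun i => CSeries (fun j => A i j * f i j)%C) =
  csum K (fun i => csum K (fun j => A i j * f i j)%C).
Proof.
  intros HA. rewrite (CSeries_finite _ K).
  - apply csum_ext. intros i Hi. apply CSeries_finite. intros j Hj. rewrite HA by lia. ring.
  - intros i Hi. rewrite (CSeries_finite _ K).
    + apply csum_eq0. intros j _. rewrite HA by lia. ring.
    + intros j _. rewrite HA by lia. ring.
Qed.

Lemma trace_supported K A : supported K A -> trace A = csum K (fun i => A i i).
Proof. intros HA. apply CSeries_finite. intros. apply HA. lia. Qed.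

(* [c i j 0] is the coefficient of [A i j] itself; descend on [i + j]. *)
Lemma supported_shift_zero K (c : nat -> nat -> nat -> C) (A : Op) :
  supported K A ->
  (forall i j, c i j O = RtoC 0 -> A i j = RtoC 0) ->
  (forall i j, csum K (fun k => c i j k * A (i + k)%nat (j + k)%nat)%C = RtoC 0) ->
  forall i j, A i j = RtoC 0.
Proof.
  intros HA Hlead Hsum.
  assert (H : forall d i j, (K + K <= i + j + d)%nat -> A i j = RtoC 0).
  { induction d as [|d IH]; intros i j Hd; [apply HA; lia|].
    destruct (Nat.lt_ge_cases i K); [|apply HA; lia].
    destruct (Nat.lt_ge_cases j K); [|apply HA; lia].
    destruct K as [|K]; [lia|].
    pose proof (Hsum i j) as E.
    rewrite csum_Sl, csum_eq0, !Nat.add_0_r, Cplus_0_r in E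
      by (intros k _; rewrite IH by lia; ring).
    destruct (Ceq_dec (c i j O) (RtoC 0)) as [Hc|Hc]; auto.
    destruct (Ceq_dec (A i j) (RtoC 0)) as [|HAij]; auto.
    exfalso. exact (Cmult_neq_0 _ _ Hc HAij E). }
  intros i j. apply (H (K + K)%nat). lia.
Qed.

(** * The Vertigo map *)

Definition vertigo_coef (t : R) (i j k : nat) : R :=
  (t - 1) ^ k / INR (fact k) * sqrt t ^ i * sqrt t ^ j
  * sqrt (INR (fact (i + k)) / INR (fact i))
  * sqrt (INR (fact (j + k)) / INR (fact j)).

Lemma vertigo_csum t A K i j : supported K A ->
  vertigo t A i j =
  csum K (fun k => RtoC (vertigo_coef t i j k) * A (i + k)%nat (j + k)%nat)%C.
Proof. intros HA. apply CSeries_finite. intros k Hk. rewrite HA by lia. ring. Qed.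

Lemma vertigo_coef0 t i j : vertigo_coef t i j 0 = sqrt t ^ (i + j).
Proof.
  unfold vertigo_coef. rewrite !Nat.add_0_r, !Rdiv_diag, sqrt_1, pow_add
    by apply INR_fact_neq_0.
  simpl. field.
Qed.

Lemma vertigo_coef_diag t i k : 0 <= t ->
  vertigo_coef t i i k = (t - 1) ^ k * t ^ i * INR (fact (i + k)) / (INR (fact k) * INR (fact i)).
Proof.
  intros Ht. unfold vertigo_coef.
  rewrite <- (sqrt_pow_double t i), pow_add by auto.
  pose proof (fact_pos k). pose proof (fact_pos i).
  transitivity ((t - 1) ^ k / INR (fact k) * (sqrt t ^ i * sqrt t ^ i)
    * (sqrt (INR (fact (i + k)) / INR (fact i)) * sqrt (INR (fact (i + k)) / INR (fact i)))).
  { ring. }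
  rewrite sqrt_sqrt by (apply Rlt_le, Rdiv_lt_0_compat; auto using fact_pos).
  field. lra.
Qed.

Lemma binom_state_supported m : supported (S m) (binom_state m).
Proof.
  intros i j H. unfold binom_state.
  destruct (Nat.eqb_spec i j) as [<-|]; auto.
  replace (i <=? m)%nat with false by (symmetry; apply Nat.leb_gt; lia). auto.
Qed.

Lemma binom_state_offdiag m i j : i <> j -> binom_state m i j = RtoC 0.
Proof. intros H. unfold binom_state. destruct (Nat.eqb_spec i j); auto; lia. Qed.

Lemma binom_state_diag m i : (i <= m)%nat -> binom_state m i i = RtoC (Binomial.C m i / 2 ^ m).
Proof.
  intros H. unfold binom_state. rewrite Nat.eqb_refl.
  replace (i <=? m)%nat with true by (symmetry; apply Nat.leb_le; auto). auto.
Qed.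

Lemma binom_state_trace m : csum (S m) (fun i => binom_state m i i) = RtoC 1.
Proof.
  rewrite (csum_ext _ _ (fun i => RtoC (Binomial.C m i * 1 ^ i * / 2 ^ m))).
  - rewrite csum_RtoC, <- scal_sum, sum_binomial. f_equal.
    replace (1 + 1) with 2 by ring. field. apply pow_nonzero. lra.
  - intros i Hi. rewrite binom_state_diag by lia. rewrite pow1. f_equal. field.
    apply pow_nonzero. lra.
Qed.

(* [C(m, i + k) (i + k)! / (i! k!) = C(m, i) C(m - i, k)], then the binomial theorem
   in [t - 1]. *)
Lemma vertigo_binom_state m t i j : 0 <= t ->
  vertigo t (binom_state m) i j = (RtoC (t ^ m) * binom_state m i j)%C.
Proof.
  intros Ht. rewrite (vertigo_csum t _ (S m)) by apply binom_state_supported.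
  destruct (Nat.eq_dec i j) as [<-|Hij].
  2:{ rewrite binom_state_offdiag by auto. rewrite csum_eq0; [ring|].
      intros k _. rewrite binom_state_offdiag by lia. ring. }
  destruct (Nat.le_gt_cases i m) as [Him|Him].
  2:{ rewrite binom_state_supported by lia. rewrite csum_eq0; [ring|].
      intros k _. rewrite binom_state_supported by lia. ring. }
  rewrite (csum_widen (S (m - i))) by (lia || intros; rewrite binom_state_supported by lia; ring).
  rewrite (csum_ext _ _ (fun k => RtoC (Binomial.C (m - i) k * (t - 1) ^ k
                                        * (t ^ i * Binomial.C m i / 2 ^ m)))).
  - rewrite csum_RtoC, <- scal_sum, sum_binomial, binom_state_diag, <- RtoC_mult by auto.
    f_equal. replace (t - 1 + 1) with t by ring.
    replace (t ^ m) with (t ^ i * t ^ (m - i)) by (rewrite <- pow_add; f_equal; lia).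
    field. apply pow_nonzero. lra.
  - intros k Hk. rewrite binom_state_diag, vertigo_coef_diag, <- RtoC_mult by (auto; lia).
    f_equal. unfold Binomial.C. replace (m - (i + k))%nat with (m - i - k)%nat by lia.
    pose proof (fact_pos i). pose proof (fact_pos k). pose proof (fact_pos (m - i)).
    pose proof (fact_pos (m - i - k)). pose proof (pow_lt 2 m ltac:(lra)).
    pose proof (fact_pos (i + k)). field. repeat split; lra.
Qed.

Lemma density_col_zero rho j k : is_density rho -> rho k k = RtoC 0 -> rho j k = RtoC 0.
Proof.
  intros [Hsa [Hpsd _]] Hkk.
  destruct (Nat.eq_dec j k) as [->|Hjk]; auto.
  set (z := rho j k). set (r := Re (rho j j)).
  set (eps := / (r * r + 1)).
  assert (Heps : 0 < eps) by (unfold eps; apply Rinv_0_lt_compat; nra).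
  assert (Hepsr : eps * r < 2).
  { apply (Rmult_lt_reg_r (r * r + 1)); [nra|].
    replace (eps * r * (r * r + 1)) with r by (unfold eps; field; nra). nra. }
  (* Positivity at [v = - eps z e_j + e_k] reads [eps |z|^2 (eps r - 2) >= 0]. *)
  set (v := fun i => if (i =? j)%nat then (RtoC (- eps) * z)%C
                     else if (i =? k)%nat then RtoC 1 else RtoC 0).
  assert (Hv : forall i, i <> j -> i <> k -> v i = RtoC 0).
  { intros i Hij Hik. unfold v. apply Nat.eqb_neq in Hij, Hik. rewrite Hij, Hik. auto. }
  pose proof (Hpsd (S (Nat.max j k)) v) as Q.
  rewrite (csum_pair _ j k) in Q; try lia.
  2:{ intros i _ Hij Hik. rewrite (Hv i) by auto. apply csum_eq0. intros. ring_simplify.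
      apply injective_projections; simpl; ring. }
  rewrite !(csum_pair _ j k) in Q; try lia.
  2,3: intros i _ Hij Hik; rewrite (Hv i) by auto; ring.
  unfold v in Q. rewrite Nat.eqb_refl in Q.
  apply Nat.eqb_neq in Hjk. rewrite Nat.eqb_sym, Hjk, Nat.eqb_refl in Q.
  rewrite Hkk, (Hsa j k) in Q. fold z in Q.
  unfold r in Hepsr. destruct z as [a b], (rho j j) as [c d]. simpl in Q, Hepsr.
  assert (Hform : 0 <= eps * (a * a + b * b) * (eps * c - 2))
    by (eapply Rle_trans; [exact Q | right; ring]).
  assert (Hab : a * a + b * b <= 0).
  { apply (Rmult_le_reg_l eps); auto. nra. }
  apply injective_projections; simpl; nra.
Qed.

Lemma density_row_zero rho j k : is_density rho -> rho k k = RtoC 0 -> rho k j = RtoC 0.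
Proof.
  intros Hd Hkk. pose proof Hd as [Hsa _]. rewrite Hsa, (density_col_zero rho j k) by auto.
  apply injective_projections; simpl; ring.
Qed.

Lemma last_nonzero (f : nat -> C) K : (forall k, (K <= k)%nat -> f k = RtoC 0) ->
  ~ (forall k, f k = RtoC 0) ->
  exists M, f M <> RtoC 0 /\ forall k, (M < k)%nat -> f k = RtoC 0.
Proof.
  induction K as [|K IH]; intros Hz Hnz.
  - exfalso. apply Hnz. intros k. apply Hz. lia.
  - destruct (Ceq_dec (f K) (RtoC 0)) as [HK|HK].
    + apply IH; auto. intros k Hk.
      destruct (Nat.eq_dec k K) as [->|]; [exact HK | apply Hz; lia].
    + exists K. auto.
Qed.

(* By positivity, a zero diagonal entry kills its row and column. *)
Lemma density_top_diag rho : is_density rho -> fock_bounded rho ->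
  exists M, rho M M <> RtoC 0 /\ supported (S M) rho.
Proof.
  intros Hd Hb. destruct (fock_bounded_supported _ Hb) as [K HK].
  destruct (last_nonzero (fun k => rho k k) K) as [M [HM Htop]].
  - intros k Hk. apply HK. lia.
  - intros H0. destruct Hd as [_ [_ Htr]].
    rewrite (trace_supported K), csum_eq0 in Htr by auto.
    apply RtoC_inj in Htr. lra.
  - exists M. split; auto. intros i j [Hi|Hi].
    + apply density_row_zero, Htop; auto.
    + apply density_col_zero, Htop; auto.
Qed.

Lemma density_binom_state_multiple rho m (beta : C) : is_density rho ->
  (forall i j, rho i j = (beta * binom_state m i j)%C) ->
  forall i j, rho i j = binom_state m i j.
Proof.
  intros [_ [_ Htr]] Hrho.
  assert (Hbeta : beta = RtoC 1).
  { rewrite (trace_supported (S m)) in Htr.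
    - rewrite (csum_ext _ _ _ (fun i _ => Hrho i i)), <- csum_mult_l, binom_state_trace in Htr.
      rewrite <- Htr. ring.
    - intros i j H. rewrite Hrho, binom_state_supported by auto. ring. }
  intros i j. rewrite Hrho, Hbeta. ring.
Qed.

Lemma vertigo_top_diag t A M : supported (S M) A -> 0 <= t ->
  vertigo t A M M = (RtoC (t ^ M) * A M M)%C.
Proof.
  intros HA Ht. rewrite (vertigo_csum t A (S M)) by exact HA. rewrite csum_Sl, csum_eq0.
  - rewrite vertigo_coef0, !Nat.add_0_r, sqrt_pow_double by auto. ring.
  - intros k _. rewrite HA by lia. ring.
Qed.

Lemma vertigo_sub t K A B (beta : C) i j : supported K A -> supported K B ->
  vertigo t (fun i j => A i j - beta * B i j)%C i j = (vertigo t A i j - beta * vertigo t B i j)%C.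
Proof.
  intros HA HB.
  rewrite !(vertigo_csum t _ K) by (auto; intros i' j' H; rewrite HA, HB by auto; ring).
  unfold Cminus. rewrite csum_mult_l, csum_opp, <- csum_plus.
  apply csum_ext. intros. ring.
Qed.

(* The diagonal coefficient [sqrt t ^ (i + j) - t ^ M] of [V_t - t ^ M] vanishes on
   [[0, M]^2] only at [i = j = M]. *)
Lemma vertigo_eigen_top_zero t M D : 1 < t -> supported (S M) D -> D M M = RtoC 0 ->
  (forall i j, vertigo t D i j = (RtoC (t ^ M) * D i j)%C) -> forall i j, D i j = RtoC 0.
Proof.
  intros Ht HD HMM Heig.
  apply (supported_shift_zero (S M) (fun i j k =>
           RtoC (vertigo_coef t i j k) - if (k =? 0)%nat then RtoC (t ^ M) else RtoC 0)%C D HD).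
  - intros i j Hc. simpl in Hc. rewrite vertigo_coef0 in Hc.
    destruct (Nat.le_gt_cases i M), (Nat.le_gt_cases j M); try (apply HD; lia).
    assert (Hij : (i + j = M + M)%nat).
    { apply (pow_inj_gt1 (sqrt t)).
      - rewrite <- sqrt_1. apply sqrt_lt_1; lra.
      - rewrite sqrt_pow_double by lra. apply RtoC_inj. apply Ceq_minus. exact Hc. }
    replace i with M by lia. replace j with M by lia. exact HMM.
  - intros i j. apply Ceq_minus.
    rewrite (csum_ext _ _ (fun k => RtoC (vertigo_coef t i j k) * D (i + k)%nat (j + k)%nat
        - (if (k =? 0)%nat then RtoC (t ^ M) * D (i + k)%nat (j + k)%nat else RtoC 0))%C)
      by (intros [|k] _; simpl; ring).
    unfold Cminus. rewrite csum_plus, <- csum_opp, <- vertigo_csum by exact HD.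
    rewrite (csum_only _ 0); [| lia | intros [|k] _ Hk; [lia | reflexivity]].
    rewrite Heig, !Nat.add_0_r. simpl. ring.
Qed.

Lemma vertigo_eigen_binom_state rho t : is_density rho -> fock_bounded rho -> 1 < t ->
  vertigo_eigen t rho -> exists m, forall i j, rho i j = binom_state m i j.
Proof.
  intros Hd Hb Ht [lam Hlam].
  destruct (density_top_diag rho Hd Hb) as [M [HMM HM]].
  assert (Hlam_top : lam = RtoC (t ^ M)).
  { pose proof (Hlam M M) as E. rewrite vertigo_top_diag in E by (auto; lra).
    replace lam with (lam * rho M M / rho M M)%C by (field; auto).
    rewrite <- E. field. auto. }
  subst lam.
  set (beta := (rho M M * RtoC (2 ^ M))%C).
  exists M. apply (density_binom_state_multiple rho M beta Hd). intros i j. apply Ceq_minus.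
  revert i j. apply (vertigo_eigen_top_zero t M); auto.
  - intros i j H. rewrite HM, binom_state_supported by auto. ring.
  - rewrite binom_state_diag, C_n_n by auto. unfold beta.
    rewrite <- Cmult_assoc, <- RtoC_mult, Rmult_div_assoc, Rmult_1_r, Rdiv_diag
      by (apply pow_nonzero; lra).
    ring.
  - intros i j. rewrite (vertigo_sub t (S M)) by auto using binom_state_supported.
    rewrite Hlam, vertigo_binom_state by lra. ring.
Qed.

(** * Displacement operators and parity *)

Lemma Defs_Cpow z n : Defs.Cpow z n = (z ^ n)%C.
Proof. induction n as [|n IH]; simpl; [reflexivity | now rewrite IH]. Qed.

Definition sqrt_fact (n : nat) : R := sqrt (INR (fact n)).

Lemma sqrt_fact_pos n : 0 < sqrt_fact n.
Proof. apply sqrt_lt_R0, fact_pos. Qed.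

Lemma sqrt_fact_sqr n : sqrt_fact n * sqrt_fact n = INR (fact n).
Proof. apply sqrt_sqrt, Rlt_le, fact_pos. Qed.

Definition adag_coef (j k : nat) : R := sqrt_fact j / sqrt_fact k / INR (fact (j - k)).

(* [exp_adag b j k = <j| exp (b a^dag) |k>]; transposed, it is [<k| exp (b a) |j>]. *)
Definition exp_adag (b : C) (j k : nat) : C :=
  if (k <=? j)%nat then (b ^ (j - k) * RtoC (adag_coef j k))%C else RtoC 0.

Lemma exp_adag_gt b j k : (j < k)%nat -> exp_adag b j k = RtoC 0.
Proof. intros H. unfold exp_adag. destruct (Nat.leb_spec k j); [lia | reflexivity]. Qed.

Lemma exp_adag_le b j k : (k <= j)%nat ->
  exp_adag b j k = (b ^ (j - k) * RtoC (adag_coef j k))%C.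
Proof. intros H. unfold exp_adag. destruct (Nat.leb_spec k j); [reflexivity | lia]. Qed.

Lemma exp_adag_scale b c j k : exp_adag (b * c) j k = (c ^ (j - k) * exp_adag b j k)%C.
Proof.
  unfold exp_adag. destruct (k <=? j)%nat; [rewrite Cpow_mult_l|]; ring.
Qed.

Lemma exp_adag_conj b j k : Cconj (exp_adag b j k) = exp_adag (Cconj b) j k.
Proof.
  unfold exp_adag. destruct (k <=? j)%nat.
  - rewrite Cmult_conj, Cpow_conj, Cconj_RtoC. auto.
  - apply Cconj_RtoC.
Qed.

Lemma disp_elem_exp_adag al m n K : (Nat.min m n < K)%nat ->
  disp_elem al m n = (RtoC (exp (- Cmod al ^ 2 / 2))
                      * csum K (fun k => exp_adag al m k * exp_adag (- Cconj al) n k))%C.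
Proof.
  intros HK. unfold disp_elem. f_equal.
  rewrite (csum_widen (S (Nat.min m n)) K); [|lia|].
  2:{ intros k Hk. destruct (Nat.le_gt_cases k m);
      [rewrite (exp_adag_gt _ n k) | rewrite (exp_adag_gt _ m k)]; lia || ring. }
  apply csum_ext. intros k Hk. rewrite !Defs_Cpow, !exp_adag_le by lia.
  replace (sqrt (INR (fact m) * INR (fact n)) /
           (INR (fact k) * INR (fact (m - k)) * INR (fact (n - k))))
    with (adag_coef m k * adag_coef n k).
  - rewrite (Defs_Cpow (- Cconj al)), RtoC_mult. ring.
  - unfold adag_coef. rewrite sqrt_mult by (apply Rlt_le, fact_pos).
    fold (sqrt_fact m) (sqrt_fact n). rewrite <- (sqrt_fact_sqr k).
    pose proof (sqrt_fact_pos k). pose proof (fact_pos (m - k)). pose proof (fact_pos (n - k)).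
    field. repeat split; lra.
Qed.

(* Entrywise form of [(-1)^n D(al) (-1)^n = D(al)^dag]. *)
Lemma disp_elem_conj_parity al i l :
  (RtoC ((-1) ^ l) * Cconj (disp_elem al i l) = RtoC ((-1) ^ i) * disp_elem al l i)%C.
Proof.
  rewrite !(disp_elem_exp_adag al _ _ (S (Nat.min i l))) by lia.
  rewrite Cmult_conj, Cconj_RtoC, csum_conj, !csum_mult_l.
  apply csum_ext. intros k Hk.
  rewrite Cmult_conj, !exp_adag_conj, Copp_conj, Cconj_conj.
  replace (Cconj al) with (- Cconj al * RtoC (-1))%C at 1 by ring.
  replace (- al)%C with (al * RtoC (-1))%C by ring.
  rewrite !exp_adag_scale, <- !RtoC_pow.
  assert (Hsign : (-1) ^ l * (-1) ^ (i - k) * (-1) ^ (l - k) = (-1) ^ i).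
  { replace ((-1) ^ l) with ((-1) ^ (l - k) * (-1) ^ k) by (rewrite <- pow_add; f_equal; lia).
    replace ((-1) ^ i) with ((-1) ^ (i - k) * (-1) ^ k) by (rewrite <- pow_add; f_equal; lia).
    transitivity ((-1) ^ (l - k) * (-1) ^ (l - k) * ((-1) ^ (i - k) * (-1) ^ k)); [ring|].
    rewrite neg1_pow_sqr. ring. }
  rewrite <- Hsign, !RtoC_mult. ring.
Qed.

Lemma sum_inv_fact n :
  csum (S n) (fun s => RtoC (/ (INR (fact s) * INR (fact (n - s))))) = RtoC (2 ^ n / INR (fact n)).
Proof.
  rewrite (csum_ext _ _ (fun s => RtoC (Binomial.C n s * 1 ^ s * / INR (fact n)))).
  - rewrite csum_RtoC, <- scal_sum, sum_binomial. f_equal.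
    replace (1 + 1) with 2 by ring. unfold Rdiv. ring.
  - intros s Hs. f_equal. rewrite pow1. unfold Binomial.C.
    pose proof (fact_pos s). pose proof (fact_pos (n - s)). pose proof (fact_pos n).
    field. repeat split; lra.
Qed.

Lemma exp_adag_twice b j r :
  csum (S j) (fun k => exp_adag b j k * exp_adag b k r)%C = exp_adag (RtoC 2 * b) j r.
Proof.
  destruct (Nat.lt_ge_cases j r) as [Hjr|Hrj].
  { rewrite exp_adag_gt by auto. apply csum_eq0. intros k Hk.
    rewrite (exp_adag_gt b k r) by lia. ring. }
  replace (S j) with (r + S (j - r))%nat by lia.
  rewrite csum_add, (csum_eq0 r), Cplus_0_l
    by (intros k Hk; rewrite (exp_adag_gt b k r) by lia; ring).
  rewrite (csum_ext _ _ (fun s => b ^ (j - r) * RtoC (sqrt_fact j / sqrt_fact r)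
                                 * RtoC (/ (INR (fact s) * INR (fact (j - r - s)))))%C).
  - rewrite <- csum_mult_l, sum_inv_fact, exp_adag_le, Cpow_mult_l, <- RtoC_pow by auto.
    transitivity (b ^ (j - r)
                  * RtoC (sqrt_fact j / sqrt_fact r * (2 ^ (j - r) / INR (fact (j - r)))))%C;
      [rewrite RtoC_mult; ring|].
    transitivity (b ^ (j - r) * RtoC (2 ^ (j - r) * adag_coef j r))%C; [|rewrite RtoC_mult; ring].
    unfold adag_coef. do 2 f_equal. pose proof (sqrt_fact_pos r). pose proof (fact_pos (j - r)).
    field. split; lra.
  - intros s Hs. rewrite !exp_adag_le by lia.
    replace (j - (r + s))%nat with (j - r - s)%nat by lia.
    replace (r + s - r)%nat with s by lia.
    replace (b ^ (j - r))%C with (b ^ (j - r - s) * b ^ s)%C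
      by (rewrite <- Cpow_add_r; f_equal; lia).
    transitivity (b ^ (j - r - s) * b ^ s * RtoC (adag_coef j (r + s) * adag_coef (r + s) r))%C;
      [rewrite RtoC_mult; ring|].
    rewrite <- !Cmult_assoc, <- RtoC_mult. do 3 f_equal. unfold adag_coef.
    replace (r + s - r)%nat with s by lia. replace (j - (r + s))%nat with (j - r - s)%nat by lia.
    pose proof (sqrt_fact_pos r). pose proof (sqrt_fact_pos (r + s)). pose proof (fact_pos s).
    pose proof (fact_pos (j - r - s)). field. repeat split; lra.
Qed.

Module NatBinomial.
Import ssreflect ssrbool ssrnat fintype bigop binomial.

Lemma factorial_fact n : n`! = fact n.
Proof. by elim: n => //= n IH; rewrite factS IH mulnE. Qed.

Lemma INR_binomial n k : (k <= n)%coq_nat -> INR 'C(n, k) = Binomial.C n k.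
Proof.
  move/leP=> kn. have := bin_fact kn.
  rewrite !factorial_fact /Binomial.C !mulnE subnE => <-.
  have := fact_pos k. have := fact_pos (n - k)%coq_nat.
  rewrite !mult_INR => *. field. split; lra.
Qed.

Lemma binomial_gt n k : (n < k)%coq_nat -> 'C(n, k) = 0%N.
Proof. by move/ltP; exact: bin_small. Qed.

Lemma INR_sum_ord (F : nat -> nat) n :
  INR (\sum_(j < n.+1) F j) = sum_f_R0 (fun j => INR (F j)) n.
Proof.
  elim: n => [|n IH]; first by rewrite big_ord_recr big_ord0.
  rewrite big_ord_recr /= -IH. exact: plus_INR.
Qed.

Lemma vandermonde_sum a b n :
  sum_f_R0 (fun r => INR ('C(a, r) * 'C(b, n - r))) n = INR 'C((a + b)%coq_nat, n).
Proof.
  by rewrite -Vandermonde (INR_sum_ord (fun r => 'C(a, r) * 'C(b, n - r))%N).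
Qed.
End NatBinomial.

(* Vandermonde's identity [sum_r C(k', r) C(l - k', k - r) = C(l, k)] in disguise. *)
Lemma adag_coef_convolution k k' l : (k <= l)%nat -> (k' <= l)%nat ->
  sum_f_R0 (fun r => if andb (r <=? k')%nat (k + k' <=? l + r)%nat
                     then adag_coef k r * adag_coef k' r / INR (fact (l + r - k - k')) else 0) k
  = adag_coef l k * adag_coef l k'.
Proof.
  intros Hk Hk'.
  set (c := sqrt_fact k * sqrt_fact k' / (INR (fact k') * INR (fact (l - k')))).
  rewrite (sum_eq _ (fun r =>
    INR (binomial.binomial k' r * binomial.binomial (l - k') (k - r)) * c)).
  - rewrite <- scal_sum, NatBinomial.vandermonde_sum, NatBinomial.INR_binomial by lia.
    replace (k' + (l - k'))%nat with l by lia.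
    unfold c, adag_coef, Binomial.C.
    rewrite <- (sqrt_fact_sqr k), <- (sqrt_fact_sqr k'), <- (sqrt_fact_sqr l).
    pose proof (sqrt_fact_pos k). pose proof (sqrt_fact_pos k'). pose proof (sqrt_fact_pos l).
    pose proof (fact_pos (l - k)). pose proof (fact_pos (l - k')).
    field. repeat split; lra.
  - intros r Hr. rewrite mult_INR.
    destruct (Nat.leb_spec r k'), (Nat.leb_spec (k + k') (l + r)); simpl.
    + rewrite !NatBinomial.INR_binomial by lia. unfold c, adag_coef, Binomial.C.
      replace (l - k' - (k - r))%nat with (l + r - k - k')%nat by lia.
      rewrite <- (sqrt_fact_sqr k'), <- (sqrt_fact_sqr r).
      pose proof (sqrt_fact_pos k). pose proof (sqrt_fact_pos k'). pose proof (sqrt_fact_pos r).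
      pose proof (fact_pos (l - k')). pose proof (fact_pos (k - r)).
      pose proof (fact_pos (k' - r)). pose proof (fact_pos (l + r - k - k')).
      field. repeat split; lra.
    + rewrite (NatBinomial.binomial_gt (l - k')) by lia. simpl. ring.
    + rewrite NatBinomial.binomial_gt by lia. simpl. ring.
    + rewrite NatBinomial.binomial_gt by lia. simpl. ring.
Qed.

(* The [l]-th term of the Cauchy product of [exp w] with
   [<k| exp (b a^dag) exp (g a) |k'>]. *)
Lemma exp_adag_swap_term b g w k k' l : (b * g = RtoC w)%C ->
  (exp_adag g l k * exp_adag b l k')%C =
  csum (S k) (fun r => if (k + k' - r <=? l)%nat
                       then exp_adag b k r * exp_adag g k' r
                            * RtoC (w ^ (l - (k + k' - r)) / INR (fact (l - (k + k' - r))))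
                       else RtoC 0)%C.
Proof.
  intros Hbg.
  destruct (Nat.lt_ge_cases l k) as [Hlk|Hlk].
  { rewrite (exp_adag_gt g l k), Cmult_0_l by auto. symmetry. apply csum_eq0.
    intros r Hr. destruct (Nat.leb_spec (k + k' - r) l); auto.
    rewrite (exp_adag_gt g k' r) by lia. ring. }
  destruct (Nat.lt_ge_cases l k') as [Hlk'|Hlk'].
  { rewrite (exp_adag_gt b l k'), Cmult_0_r by auto. symmetry. apply csum_eq0.
    intros r Hr. destruct (Nat.leb_spec (k + k' - r) l); auto. lia. }
  rewrite (csum_ext _ _ (fun r => b ^ (l - k') * g ^ (l - k) * RtoC (
       if andb (r <=? k')%nat (k + k' <=? l + r)%nat
       then adag_coef k r * adag_coef k' r / INR (fact (l + r - k - k')) else 0))%C).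
  - rewrite <- csum_mult_l, csum_RtoC, adag_coef_convolution, !exp_adag_le, RtoC_mult by auto.
    ring.
  - intros r Hr.
    destruct (Nat.leb_spec (k + k' - r) l), (Nat.leb_spec r k'), (Nat.leb_spec (k + k') (l + r));
      simpl; try lia.
    + rewrite !exp_adag_le by lia.
      set (n := (l - (k + k' - r))%nat).
      replace (l - k')%nat with (k - r + n)%nat by (unfold n; lia).
      replace (l - k)%nat with (k' - r + n)%nat by (unfold n; lia).
      replace (l + r - k - k')%nat with n by (unfold n; lia).
      rewrite !Cpow_add_r. unfold Rdiv. rewrite !RtoC_mult, (RtoC_pow w n), <- Hbg, Cpow_mult_l.
      ring.
    + rewrite (exp_adag_gt g k' r) by lia. ring.
    + ring.
Qed.

(* Normal ordering [exp (g a) exp (b a^dag) = exp (b g) exp (b a^dag) exp (g a)],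
   entrywise. *)
Lemma Cis_series_exp_adag_swap b g w k k' : (b * g = RtoC w)%C ->
  Cis_series (fun l => exp_adag g l k * exp_adag b l k')%C
    (RtoC (exp w) * csum (S k) (fun r => exp_adag b k r * exp_adag g k' r))%C.
Proof.
  intros Hbg. rewrite (Cmult_comm (RtoC (exp w))), csum_mult_r.
  eapply Cis_series_ext; [intros l; symmetry; exact (exp_adag_swap_term b g w k k' l Hbg)|].
  apply Cis_series_csum. intros r _.
  apply (Cis_series_shift (fun n => _ * RtoC (w ^ n / INR (fact n)))%C).
  apply Cis_series_scal, Cis_series_exp.
Qed.

Lemma Cmult_conj_opp al : (al * - Cconj al)%C = RtoC (- Cmod al ^ 2).
Proof. rewrite RtoC_opp, Cmod2_conj. ring. Qed.

Lemma disp_parity_summand al j i l :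
  (RtoC ((-1) ^ l) * (disp_elem al j l * Cconj (disp_elem al i l)))%C =
  (RtoC ((-1) ^ i) * RtoC (exp (- Cmod al ^ 2)) * csum (S j) (fun k => csum (S i) (fun k' =>
     exp_adag al j k * exp_adag (- Cconj al) i k'
     * (exp_adag (- Cconj al) l k * exp_adag al l k'))))%C.
Proof.
  set (g := (- Cconj al)%C). set (h := RtoC (exp (- Cmod al ^ 2 / 2))).
  replace (RtoC (exp (- Cmod al ^ 2))) with (h * h)%C
    by (unfold h; rewrite <- RtoC_mult, <- exp_plus; do 2 f_equal; field).
  rewrite Cmult_assoc, (Cmult_comm (RtoC ((-1) ^ l))), <- Cmult_assoc, disp_elem_conj_parity,
    (disp_elem_exp_adag al j l (S j)), (disp_elem_exp_adag al l i (S i)) by lia.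
  fold h g.
  transitivity (RtoC ((-1) ^ i) * (h * h)
    * (csum (S j) (fun k => exp_adag al j k * exp_adag g l k)
       * csum (S i) (fun k' => exp_adag al l k' * exp_adag g i k')))%C; [ring|].
  rewrite csum_prod. f_equal. apply csum_ext. intros. apply csum_ext. intros. ring.
Qed.

Lemma exp_adag_twice_pair b g j i :
  csum (S j) (fun k => csum (S i) (fun k' => exp_adag b j k * exp_adag g i k'
                         * csum (S k) (fun r => exp_adag b k r * exp_adag g k' r)))%C
  = csum (S j) (fun r => exp_adag (RtoC 2 * b) j r * exp_adag (RtoC 2 * g) i r)%C.
Proof.
  transitivity (csum (S j) (fun k => csum (S i) (fun k' => csum (S j) (fun r =>
     exp_adag b j k * exp_adag b k r * (exp_adag g i k' * exp_adag g k' r)))))%C.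
  { apply csum_ext. intros k Hk. apply csum_ext. intros k' _.
    rewrite (csum_widen (S k) (S j))
      by (lia || (intros r Hr; rewrite (exp_adag_gt b k r) by lia; ring)).
    rewrite csum_mult_l. apply csum_ext. intros. ring. }
  rewrite (csum_ext _ _ (fun k => csum (S j) (fun r => csum (S i) (fun k' =>
     exp_adag b j k * exp_adag b k r * (exp_adag g i k' * exp_adag g k' r)))%C))
    by (intros; apply csum_swap).
  rewrite csum_swap. apply csum_ext. intros r _.
  rewrite <- !exp_adag_twice. symmetry. apply csum_prod.
Qed.

(* [D(al) (-1)^n D(al)^dag = e^{-2|al|^2} exp (2 al a^dag) (-1)^n exp (- 2 al^* a)],
   entrywise. *)
Lemma disp_parity_elem_csum al j i :
  disp_parity_elem al j i =
  (RtoC ((-1) ^ i) * RtoC (exp (-2 * Cmod al ^ 2)) *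
   csum (S j) (fun r => exp_adag (RtoC 2 * al) j r * exp_adag (RtoC 2 * - Cconj al) i r))%C.
Proof.
  set (e := RtoC (exp (- Cmod al ^ 2))).
  replace (RtoC (exp (-2 * Cmod al ^ 2))) with (e * e)%C
    by (unfold e; rewrite <- RtoC_mult, <- exp_plus; do 2 f_equal; ring).
  rewrite <- exp_adag_twice_pair, (Cmult_assoc _ e e), <- (Cmult_assoc _ e).
  unfold disp_parity_elem. apply Cis_series_unique.
  eapply Cis_series_ext; [intros l; symmetry; apply disp_parity_summand|]. fold e.
  apply Cis_series_scal. rewrite csum_mult_l.
  apply Cis_series_csum. intros k _. rewrite csum_mult_l.
  apply Cis_series_csum. intros k' _.
  rewrite Cmult_assoc, (Cmult_comm e), <- Cmult_assoc.
  apply Cis_series_scal, Cis_series_exp_adag_swap, Cmult_conj_opp.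
Qed.

(** * The Wigner function *)

Definition wigner_kernel (i j r : nat) : C :=
  (RtoC ((-1) ^ i) * exp_adag (RtoC 2) j r * exp_adag (RtoC (-2)) i r)%C.

Lemma wigner_kernel_gt i j r : (i < r)%nat \/ (j < r)%nat -> wigner_kernel i j r = RtoC 0.
Proof.
  unfold wigner_kernel. intros [H|H].
  - rewrite (exp_adag_gt _ i r) by exact H. ring.
  - rewrite (exp_adag_gt _ j r) by exact H. ring.
Qed.

Lemma disp_parity_elem_kernel al j i :
  disp_parity_elem al j i = (RtoC (exp (-2 * Cmod al ^ 2)) *
    csum (S j) (fun r => wigner_kernel i j r * al ^ (j - r) * Cconj al ^ (i - r)))%C.
Proof.
  rewrite disp_parity_elem_csum, (Cmult_comm (RtoC ((-1) ^ i))), <- Cmult_assoc, csum_mult_l.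
  f_equal. apply csum_ext. intros r _.
  replace (RtoC 2 * - Cconj al)%C with (RtoC (-2) * Cconj al)%C
    by (apply injective_projections; simpl; ring).
  rewrite !exp_adag_scale. unfold wigner_kernel. ring.
Qed.

Definition wigner_coef (K : nat) (A : Op) (p q : nat) : C :=
  csum K (fun r => wigner_kernel (q + r) (p + r) r * A (q + r)%nat (p + r)%nat)%C.

Definition wigner_poly (K : nat) (A : Op) (al : C) : C :=
  csum K (fun p => csum K (fun q => wigner_coef K A p q * al ^ p * Cconj al ^ q))%C.

Lemma wigner_eq_poly K A al : supported K A ->
  wigner A al = (RtoC (2 / PI) * RtoC (exp (-2 * Cmod al ^ 2)) * wigner_poly K A al)%C.
Proof.
  intros HA. unfold wigner.
  rewrite (supported_csum K A (fun i j => disp_parity_elem al j i)) by auto.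
  rewrite <- Cmult_assoc. f_equal.
  set (f := fun i j r => (A i j * wigner_kernel i j r * al ^ (j - r) * Cconj al ^ (i - r))%C).
  transitivity (RtoC (exp (-2 * Cmod al ^ 2))
                * csum K (fun i => csum K (fun j => csum K (f i j))))%C.
  { rewrite csum_mult_l. apply csum_ext. intros i _.
    rewrite csum_mult_l. apply csum_ext. intros j Hj.
    rewrite disp_parity_elem_kernel, (csum_widen (S j) K (f i j))
      by (lia || (intros r Hr; unfold f; rewrite wigner_kernel_gt by lia; ring)).
    rewrite !csum_mult_l. apply csum_ext. intros. unfold f. ring. }
  f_equal. unfold wigner_poly, wigner_coef.
  rewrite (csum_ext _ _ (fun i => csum K (fun r => csum K (fun j => f i j r))))
    by (intros; apply csum_swap).
  rewrite csum_swap.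
  (* Reindex by [i = q + r], [j = p + r]; [f i j r] vanishes unless [r <= i, j < K]. *)
  rewrite (csum_ext _ _ (fun r => csum K (fun p => csum K (fun q => f (q + r) (p + r) r)%nat))).
  2:{ intros r Hr. rewrite csum_swap, (csum_shift K r).
      - apply csum_ext. intros p _. apply (csum_shift K r (fun i => f i (p + r)%nat r)).
        + intros q Hq. unfold f. rewrite wigner_kernel_gt by lia. ring.
        + intros q Hq. unfold f. rewrite HA by lia. ring.
      - intros j Hj. apply csum_eq0. intros i _. unfold f. rewrite wigner_kernel_gt by lia. ring.
      - intros j Hj. apply csum_eq0. intros i _. unfold f. rewrite HA by lia. ring. }
  rewrite csum_swap. apply csum_ext. intros p _.
  rewrite csum_swap. apply csum_ext. intros q _.
  rewrite !csum_mult_r. apply csum_ext. intros r _. unfold f.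
  replace (p + r - r)%nat with p by lia. replace (q + r - r)%nat with q by lia. ring.
Qed.

Lemma wigner_poly_sub K A B (c : C) al :
  wigner_poly K (fun i j => A i j - c * B i j)%C al
  = (wigner_poly K A al - c * wigner_poly K B al)%C.
Proof.
  unfold wigner_poly, wigner_coef, Cminus.
  rewrite csum_mult_l, csum_opp, <- csum_plus. apply csum_ext. intros p _.
  rewrite csum_mult_l, csum_opp, <- csum_plus. apply csum_ext. intros q _.
  rewrite (csum_ext _ _ (fun r => wigner_kernel (q + r) (p + r) r * A (q + r)%nat (p + r)%nat
      + - c * (wigner_kernel (q + r) (p + r) r * B (q + r)%nat (p + r)%nat))%C) by (intros; ring).
  rewrite csum_plus, <- csum_mult_l. ring.
Qed.

(** * Polynomials in [al] and its conjugate *)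

Lemma Cpow_sub_factor z z0 K :
  (z ^ S K - z0 ^ S K = (z - z0) * csum (S K) (fun k => z0 ^ (K - k) * z ^ k))%C.
Proof.
  induction K as [|K IH]; [simpl; ring|].
  rewrite csum_Sl, Nat.sub_0_r.
  rewrite (csum_ext _ _ (fun k => z * (z0 ^ (K - k) * z ^ k))%C)
    by (intros k Hk; replace (S K - S k)%nat with (K - k)%nat by lia; simpl; ring).
  rewrite <- csum_mult_l.
  transitivity (z * (z ^ S K - z0 ^ S K) + z0 ^ S K * (z - z0))%C; [simpl; ring|].
  rewrite IH. simpl. ring.
Qed.

Lemma poly_div_root K (a : nat -> C) z0 : exists b : nat -> C,
  (forall z, (csum (S K) (fun k => a k * z ^ k) - csum (S K) (fun k => a k * z0 ^ k)
              = (z - z0) * csum K (fun k => b k * z ^ k))%C) /\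
  ((forall k, (k < K)%nat -> b k = RtoC 0) -> forall k, (1 <= k <= K)%nat -> a k = RtoC 0).
Proof.
  induction K as [|K [b [Hdiv Hzero]]].
  { exists (fun _ => RtoC 0). split; [intros; simpl; ring | intros; lia]. }
  set (b' := fun k => if (k <? K)%nat then (b k + a (S K) * z0 ^ (K - k))%C else a (S K)).
  exists b'. split.
  - intros z.
    rewrite (csum_S K (fun k => b' k * z ^ k)%C).
    rewrite (csum_ext K _ (fun k => b k * z ^ k + a (S K) * (z0 ^ (K - k) * z ^ k))%C)
      by (intros k Hk; unfold b'; destruct (Nat.ltb_spec k K); [ring | lia]).
    unfold b'. rewrite Nat.ltb_irrefl, csum_plus, <- csum_mult_l.
    transitivity ((csum (S K) (fun k => a k * z ^ k) - csum (S K) (fun k => a k * z0 ^ k))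
                  + a (S K) * (z ^ S K - z0 ^ S K))%C; [rewrite !(csum_S (S K)); ring|].
    rewrite Hdiv, Cpow_sub_factor, csum_S, Nat.sub_diag. change (z0 ^ 0)%C with (RtoC 1). ring.
  - intros Hb k Hk.
    assert (HaK : a (S K) = RtoC 0).
    { pose proof (Hb K (Nat.lt_succ_diag_r K)) as E.
      unfold b' in E. rewrite Nat.ltb_irrefl in E. exact E. }
    destruct (Nat.eq_dec k (S K)) as [->|Hne]; auto.
    apply Hzero; [|lia]. intros j Hj. pose proof (Hb j ltac:(lia)) as E. unfold b' in E.
    destruct (Nat.ltb_spec j K); [|lia]. rewrite HaK in E. rewrite <- E. ring.
Qed.

Lemma poly_coef_zero_of_roots K (a : nat -> C) (f : nat -> C) :
  (forall m n, f m = f n -> m = n) ->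
  (forall n, csum K (fun k => a k * f n ^ k)%C = RtoC 0) ->
  forall k, (k < K)%nat -> a k = RtoC 0.
Proof.
  revert a f. induction K as [|K IH]; intros a f Hf Hroot k Hk; [lia|].
  destruct (poly_div_root K a (f O)) as [b [Hdiv Hconst]].
  assert (Hb : forall k, (k < K)%nat -> b k = RtoC 0).
  { apply (IH b (fun n => f (S n))).
    - intros m n E. apply Hf in E. lia.
    - intros n. pose proof (Hdiv (f (S n))) as E. rewrite !Hroot in E.
      assert (Hne : (f (S n) - f O)%C <> RtoC 0).
      { intros E0. apply Ceq_minus, Hf in E0. lia. }
      destruct (Ceq_dec (csum K (fun k => b k * f (S n) ^ k))%C (RtoC 0)) as [|Hnz]; auto.
      exfalso. apply (Cmult_neq_0 _ _ Hne Hnz). rewrite <- E. ring. }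
  destruct k as [|k]; [|apply Hconst; auto; lia].
  pose proof (Hroot O) as E. rewrite csum_Sl, csum_eq0 in E.
  - rewrite <- E. simpl. ring.
  - intros i Hi. rewrite (Hconst Hb (S i)) by lia. ring.
Qed.

Definition antidiag_coef (K : nat) (c : nat -> nat -> C) (n p : nat) : C :=
  if andb (p <=? n)%nat (n - p <? K)%nat then c p (n - p)%nat else RtoC 0.

Lemma csum_antidiag K (c : nat -> nat -> C) (x : C) :
  csum K (fun p => csum K (fun q => c p q * x ^ (p + q)))%C =
  csum (K + K) (fun n => csum K (fun p => antidiag_coef K c n p) * x ^ n)%C.
Proof.
  rewrite (csum_ext (K + K) _ (fun n => csum K (fun p => antidiag_coef K c n p * x ^ n)%C))
    by (intros; apply csum_mult_r).
  rewrite (csum_swap (K + K) K). apply csum_ext. intros p Hp.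
  rewrite (csum_shift (K + K) p).
  - rewrite (csum_widen K (K + K)); [|lia|].
    + apply csum_ext. intros q Hq. unfold antidiag_coef.
      replace (q + p - p)%nat with q by lia.
      destruct (Nat.leb_spec p (q + p)), (Nat.ltb_spec q K); try lia. simpl.
      rewrite Nat.add_comm. reflexivity.
    + intros q Hq. unfold antidiag_coef. replace (q + p - p)%nat with q by lia.
      destruct (Nat.ltb_spec q K); [lia|]. rewrite Bool.andb_false_r. ring.
  - intros n Hn. unfold antidiag_coef. destruct (Nat.leb_spec p n); [lia|]. simpl. ring.
  - intros n Hn. unfold antidiag_coef. destruct (Nat.ltb_spec (n - p) K); [lia|].
    rewrite Bool.andb_false_r. ring.
Qed.

Lemma Cconj_1i_neq0 y : Cconj (1, y) <> RtoC 0.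
Proof. intros H. apply (f_equal Re) in H. simpl in H. lra. Qed.

Definition cayley (y : R) : C := ((1, y) / Cconj (1, y))%C.

Lemma cayley_INR_inj m n : cayley (INR m) = cayley (INR n) -> m = n.
Proof.
  intros H. pose proof (Cconj_1i_neq0 (INR m)). pose proof (Cconj_1i_neq0 (INR n)).
  assert (E : ((1, INR m) * Cconj (1, INR n) = (1, INR n) * Cconj (1, INR m))%C).
  { transitivity (cayley (INR m) * (Cconj (1, INR m) * Cconj (1, INR n)))%C.
    - unfold cayley. field. auto.
    - rewrite H. unfold cayley. field. auto. }
  apply (f_equal Im) in E. simpl in E. apply INR_eq. lra.
Qed.

(* Along the line [al = x u], [x] real, the coefficient of [x ^ n] is
   [conj u ^ n * sum_p c p (n - p) (u / conj u) ^ p], and [u / conj u] takes infinitely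
   many values. *)
Lemma poly_conj_coef_zero K (c : nat -> nat -> C) :
  (forall al, csum K (fun p => csum K (fun q => c p q * al ^ p * Cconj al ^ q))%C = RtoC 0) ->
  forall p q, (p < K)%nat -> (q < K)%nat -> c p q = RtoC 0.
Proof.
  intros H.
  assert (Hn : forall u n, (n < K + K)%nat ->
    csum K (fun p => antidiag_coef K (fun p q => c p q * u ^ p * Cconj u ^ q)%C n p) = RtoC 0).
  { intros u. apply (poly_coef_zero_of_roots _ _ (fun n => RtoC (INR n))).
    - intros m n E. apply INR_eq, RtoC_inj, E.
    - intros n. rewrite <- csum_antidiag, <- (H (RtoC (INR n) * u)%C).
      apply csum_ext. intros p _. apply csum_ext. intros q _.
      rewrite Cmult_conj, Cconj_RtoC, !Cpow_mult_l, Cpow_add_r. ring. }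
  intros p q Hp Hq.
  assert (Hz : forall m, csum K (fun p' => antidiag_coef K c (p + q) p' * cayley (INR m) ^ p')%C
                         = RtoC 0).
  { intros m. pose proof (Hn (1, INR m) (p + q)%nat ltac:(lia)) as E.
    set (w := Cconj (1, INR m)). assert (Hw : w <> RtoC 0) by apply Cconj_1i_neq0.
    apply (f_equal (Cmult (/ w ^ (p + q)))) in E. rewrite csum_mult_l, Cmult_0_r in E.
    rewrite <- E. apply csum_ext. intros p' _. unfold antidiag_coef, cayley. fold w.
    destruct (Nat.leb_spec p' (p + q)); simpl; [|ring].
    destruct (p + q - p' <? K)%nat; [|ring].
    unfold Cdiv. rewrite Cpow_mult_l, Cpow_inv by auto.
    replace (p + q)%nat with (p' + (p + q - p'))%nat at 2 by lia. rewrite Cpow_add_r.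
    field. split; apply Cpow_nz; auto. }
  pose proof (poly_coef_zero_of_roots K _ _ cayley_INR_inj Hz p Hp) as E.
  unfold antidiag_coef in E. replace (p + q - p)%nat with q in E by lia.
  destruct (Nat.leb_spec p (p + q)), (Nat.ltb_spec q K); try lia. exact E.
Qed.

Lemma adag_coef_pos j k : 0 < adag_coef j k.
Proof.
  unfold adag_coef. pose proof (sqrt_fact_pos j). pose proof (sqrt_fact_pos k).
  pose proof (fact_pos (j - k)). apply Rdiv_lt_0_compat; auto. apply Rdiv_lt_0_compat; auto.
Qed.

Lemma wigner_kernel_diag_neq0 i j : wigner_kernel i j 0 <> RtoC 0.
Proof.
  unfold wigner_kernel. rewrite !exp_adag_le by lia.
  pose proof (adag_coef_pos j 0). pose proof (adag_coef_pos i 0).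
  repeat apply Cmult_neq_0; try apply Cpow_nz; apply RtoC_neq0;
    try apply pow_nonzero; lra.
Qed.

Lemma wigner_poly_zero K A : supported K A ->
  (forall al, wigner_poly K A al = RtoC 0) -> forall i j, A i j = RtoC 0.
Proof.
  intros HA H.
  assert (Hcoef : forall p q, wigner_coef K A p q = RtoC 0).
  { intros p q. destruct (Nat.lt_ge_cases p K), (Nat.lt_ge_cases q K);
      try (apply csum_eq0; intros r _; rewrite HA by lia; ring).
    apply (poly_conj_coef_zero K (wigner_coef K A)); auto. }
  apply (supported_shift_zero K (fun q p r => wigner_kernel (q + r) (p + r) r) A HA).
  - intros q p Hc. rewrite !Nat.add_0_r in Hc. contradiction (wigner_kernel_diag_neq0 q p).
  - intros q p. apply Hcoef.
Qed.

Lemma wigner_kernel_diag p r : wigner_kernel (p + r) (p + r) r =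
  RtoC ((-1) ^ r * 4 ^ p * INR (fact (p + r)) / (INR (fact r) * (INR (fact p) * INR (fact p)))).
Proof.
  unfold wigner_kernel. rewrite !exp_adag_le by lia. replace (p + r - r)%nat with p by lia.
  rewrite <- !RtoC_pow, <- !RtoC_mult. f_equal.
  assert (Hsign : (-1) ^ (p + r) * (-2) ^ p = (-1) ^ r * 2 ^ p).
  { replace ((-2) ^ p) with ((-1) ^ p * 2 ^ p) by (rewrite <- Rpow_mult_distr; f_equal; ring).
    rewrite pow_add.
    transitivity ((-1) ^ p * (-1) ^ p * ((-1) ^ r * 2 ^ p)); [ring|].
    rewrite neg1_pow_sqr. ring. }
  assert (Hcoef : adag_coef (p + r) r * adag_coef (p + r) r
                  = INR (fact (p + r)) / (INR (fact r) * (INR (fact p) * INR (fact p)))).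
  { unfold adag_coef. replace (p + r - r)%nat with p by lia.
    rewrite <- (sqrt_fact_sqr (p + r)), <- (sqrt_fact_sqr r).
    pose proof (sqrt_fact_pos r). pose proof (fact_pos p). field. split; lra. }
  replace (4 ^ p) with (2 ^ p * 2 ^ p) by (rewrite <- Rpow_mult_distr; f_equal; ring).
  transitivity ((-1) ^ (p + r) * (-2) ^ p * 2 ^ p * (adag_coef (p + r) r * adag_coef (p + r) r));
    [ring|].
  rewrite Hsign, Hcoef. unfold Rdiv. ring.
Qed.

(* Only the diagonal terms with [p + r <= m] contribute; they add up to a multiple of
   [(1 - 1) ^ (m - p)]. *)
Lemma wigner_coef_binom_state K m p q : (S m <= K)%nat ->
  wigner_coef K (binom_state m) p q =
  if andb (p =? m)%nat (q =? m)%nat then RtoC (2 ^ m / INR (fact m)) else RtoC 0.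
Proof.
  intros HK. unfold wigner_coef.
  destruct (Nat.eq_dec p q) as [<-|Hpq].
  2:{ replace (andb (p =? m)%nat (q =? m)%nat) with false
        by (destruct (Nat.eqb_spec p m), (Nat.eqb_spec q m); auto; lia).
      apply csum_eq0. intros r _. rewrite binom_state_offdiag by lia. ring. }
  destruct (Nat.le_gt_cases p m) as [Hpm|Hpm].
  2:{ replace (p =? m)%nat with false by (symmetry; apply Nat.eqb_neq; lia).
      apply csum_eq0. intros r _. rewrite binom_state_supported by lia. ring. }
  rewrite Bool.andb_diag.
  rewrite (csum_widen (S (m - p)) K)
    by (lia || (intros r Hr; rewrite binom_state_supported by lia; ring)).
  rewrite (csum_ext _ _ (fun r => RtoC (Binomial.C (m - p) r * (-1) ^ r
      * (4 ^ p * INR (fact m) / (2 ^ m * INR (fact p) * INR (fact p) * INR (fact (m - p))))))).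
  - rewrite csum_RtoC, <- scal_sum, sum_binomial. replace (-1 + 1) with 0 by ring.
    destruct (Nat.eqb_spec p m) as [->|Hne].
    + rewrite Nat.sub_diag. f_equal. simpl.
      replace (4 ^ m) with (2 ^ m * 2 ^ m) by (rewrite <- Rpow_mult_distr; f_equal; ring).
      pose proof (fact_pos m). pose proof (pow_lt 2 m ltac:(lra)). field. split; lra.
    + rewrite pow_i by lia. f_equal. ring.
  - intros r Hr. rewrite binom_state_diag, wigner_kernel_diag, <- RtoC_mult by lia.
    f_equal. unfold Binomial.C. replace (m - (p + r))%nat with (m - p - r)%nat by lia.
    pose proof (fact_pos m). pose proof (fact_pos p). pose proof (fact_pos r).
    pose proof (fact_pos (p + r)). pose proof (fact_pos (m - p)). pose proof (fact_pos (m - p - r)).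
    pose proof (pow_lt 2 m ltac:(lra)). field. repeat split; lra.
Qed.

Lemma wigner_poly_binom_state K m al : (S m <= K)%nat ->
  wigner_poly K (binom_state m) al = RtoC (2 ^ m / INR (fact m) * Cmod al ^ (2 * m)).
Proof.
  intros HK. unfold wigner_poly.
  rewrite (csum_only K m); [|lia|].
  2:{ intros p _ Hp. apply csum_eq0. intros q _. rewrite wigner_coef_binom_state by auto.
      apply Nat.eqb_neq in Hp. rewrite Hp. simpl. ring. }
  rewrite (csum_only K m); [|lia|].
  2:{ intros q _ Hq. rewrite wigner_coef_binom_state by auto.
      apply Nat.eqb_neq in Hq. rewrite Hq, Nat.eqb_refl. simpl. ring. }
  rewrite wigner_coef_binom_state, Nat.eqb_refl by auto. cbv [andb].
  rewrite RtoC_mult, pow_mult, RtoC_pow, Cmod2_conj, Cpow_mult_l. ring.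
Qed.

Lemma wigner_binom_state m al : wigner (binom_state m) al =
  (RtoC (2 / PI) * RtoC (2 ^ m / INR (fact m))
   * RtoC (Cmod al ^ (2 * m) * exp (-2 * Cmod al ^ 2)))%C.
Proof.
  rewrite (wigner_eq_poly (S m)), wigner_poly_binom_state by (auto || apply binom_state_supported).
  rewrite !RtoC_mult. ring.
Qed.

Lemma binom_state_wigner_prop m : wigner_prop m (binom_state m).
Proof. eexists. intros al. apply wigner_binom_state. Qed.

Lemma wigner_prop_binom_state rho m : is_density rho -> fock_bounded rho ->
  wigner_prop m rho -> forall i j, rho i j = binom_state m i j.
Proof.
  intros Hd Hb [c Hc].
  destruct (fock_bounded_supported _ Hb) as [K0 HK0].
  set (K := (K0 + S m)%nat).
  assert (HK : supported K rho) by (apply (supported_le K0); auto; lia).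
  assert (HB : supported K (binom_state m))
    by (apply (supported_le (S m)); [lia | apply binom_state_supported]).
  set (F := RtoC (2 ^ m / INR (fact m))).
  assert (HF : F <> RtoC 0)
    by (apply RtoC_neq0, Rgt_not_eq, Rdiv_lt_0_compat; [apply pow_lt; lra | apply fact_pos]).
  set (P := RtoC (2 / PI)).
  assert (HP : P <> RtoC 0) by (apply RtoC_neq0, Rgt_not_eq, Rdiv_lt_0_compat, PI_RGT_0; lra).
  apply (density_binom_state_multiple rho m (c / (P * F)) Hd).
  intros i j. apply Ceq_minus. revert i j.
  apply (wigner_poly_zero K).
  - intros i j H. rewrite HK, HB by auto. ring.
  - intros al. set (E := RtoC (exp (-2 * Cmod al ^ 2))).
    assert (HE : E <> RtoC 0) by (apply RtoC_neq0, Rgt_not_eq, exp_pos).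
    pose proof (Hc al) as W. rewrite (wigner_eq_poly K) in W by auto.
    rewrite wigner_poly_sub, wigner_poly_binom_state by lia.
    apply Ceq_minus. fold P E in W.
    replace (wigner_poly K rho al) with (P * E * wigner_poly K rho al / (P * E))%C
      by (field; auto).
    rewrite W, !RtoC_mult. fold E F. field. auto.
Qed.

Lemma binom_state_vertigo_eigen m t : 1 <= t -> vertigo_eigen t (binom_state m).
Proof. intros Ht. exists (RtoC (t ^ m)). intros i j. apply vertigo_binom_state. lra. Qed.

Lemma Op_ext (A B : Op) : (forall i j, A i j = B i j) -> A = B.
Proof.
  intros H. apply FunctionalExtensionality.functional_extensionality. intros i.
  apply FunctionalExtensionality.functional_extensionality. auto.
Qed.

Theorem lemma11 (rho : Op) (Hb : fock_bounded rho) (Hd : is_density rho) :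
  ((exists t : R, 1 < t /\ vertigo_eigen t rho) <->
   (forall t : R, 1 <= t -> vertigo_eigen t rho)) /\
  ((forall t : R, 1 <= t -> vertigo_eigen t rho) <->
   (exists m : nat, wigner_prop m rho)) /\
  ((exists m : nat, wigner_prop m rho) <->
   (exists m : nat, forall i j, rho i j = binom_state m i j)) /\
  (forall m : nat, wigner_prop m rho ->
     forall t : R, 1 <= t -> forall i j,
       vertigo t rho i j = Cmult (RtoC (t ^ m)) (rho i j)).
Proof.
  set (is_binom := exists m, forall i j, rho i j = binom_state m i j).
  assert (eigen_binom : (exists t, 1 < t /\ vertigo_eigen t rho) -> is_binom)
    by (intros [t [Ht He]]; exact (vertigo_eigen_binom_state rho t Hd Hb Ht He)).
  assert (wigner_binom : (exists m, wigner_prop m rho) -> is_binom)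
    by (intros [m Hm]; exists m; exact (wigner_prop_binom_state rho m Hd Hb Hm)).
  assert (binom_eigen : is_binom -> forall t, 1 <= t -> vertigo_eigen t rho)
    by (intros [m Hm]; rewrite (Op_ext _ _ Hm); apply binom_state_vertigo_eigen).
  assert (binom_wigner : is_binom -> exists m, wigner_prop m rho)
    by (intros [m Hm]; exists m; rewrite (Op_ext _ _ Hm); apply binom_state_wigner_prop).
  assert (all_some : (forall t, 1 <= t -> vertigo_eigen t rho) ->
                     exists t, 1 < t /\ vertigo_eigen t rho)
    by (intros H; exists 2; split; [lra | apply H; lra]).
  repeat split; auto.
  intros m Hm t Ht i j.
  rewrite (Op_ext _ _ (wigner_prop_binom_state rho m Hd Hb Hm)).
  apply vertigo_binom_state. lra.
Qed.
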